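(* Let $P$ be a set of $n$ points in $\mathbb{R}^3$ lying above the $xy$-plane, let $c$ be a centerpoint of $P$, and let $T=\binom{P}{3}$ be the set of all triangles with vertices in $P$. Then for any point $r$ on the $xy$-plane, the segment $cr$ intersects at least $\Omega(n^3)$ triangles of $T$ (with an absolute constant in the $\Omega$).
   Context: A centerpoint of a finite set $P\subset\mathbb{R}^3$ is a point $c\in\mathbb{R}^3$ such that every closed halfspace containing $c$ contains at least $|P|/4$ points of $P$. *)

From HB Require Import structures.
From mathcomp Require Import all_boot all_order all_algebra.
From mathcomp Require Import reals.
Set Implicit Arguments. Unset Strict Implicit. Unset Printing Implicit Defensive.
Import Order.TTheory GRing.Theory Num.Theory.
Local Open Scope ring_scope.

Section Geometry.
Variable R : realType.

Definition dot3 (u v : 'rV[R]_3) : R := \sum_(i < 3) u ord0 i * v ord0 i.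

Definition zcoord (p : 'rV[R]_3) : R := p ord0 (inord 2).

Definition centerpoint (n : nat) (f : 'I_n -> 'rV[R]_3) (c : 'rV[R]_3) : Prop :=
  forall (u : 'rV[R]_3) (b : R), u != 0 -> b <= dot3 u c ->
    (n <= 4 * #|[set i : 'I_n | (b <= dot3 u (f i))%R]|)%N.

Definition in_conv_hull (n : nat) (f : 'I_n -> 'rV[R]_3) (S : {set 'I_n})
    (x : 'rV[R]_3) : Prop :=
  exists w : 'I_n -> R,
    [/\ forall i, 0 <= w i,
        forall i, i \notin S -> w i = 0,
        \sum_i w i = 1 &
        x = \sum_i w i *: f i].

Definition on_segment (c r x : 'rV[R]_3) : Prop :=
  exists t : R, [/\ 0 <= t, t <= 1 & x = (1 - t) *: c + t *: r].

End Geometry.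

From HB Require Import structures.
From mathcomp Require Import all_boot all_order all_algebra.
From mathcomp Require Import reals boolp.
From mathcomp Require Import zify ring lra.
Set Implicit Arguments. Unset Strict Implicit. Unset Printing Implicit Defensive.
Import Order.TTheory GRing.Theory Num.Theory.
Local Open Scope ring_scope.

(* Every closed halfspace bounded by a plane through the centerpoint [c]
   contains at least [n/4] of the points, and halfspaces of R^3 shatter no
   four points.  By the epsilon-net theorem (double sampling and the
   Sauer-Shelah lemma), for a suitable constant [m] and [n >= 4 m^2] at least
   half of the [n^m] samples of [m] points are injective and meet every such
   halfspace.  For such a sample no linear functional is negative on all the
   [f i - c] and on [c - r], so by Gordan's alternative some nonnegative
   combination of the [f i - c] points from [c] towards [r]; conic
   Caratheodory reduces it to at most three points, whose triangle meets the
   segment [cr] because the points lie above the plane [z = 0] containing [r].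
   A triangle lies in at most [m^3 n^(m-3)] samples, hence at least
   [n^3 / (2 m^3)] triangles cross [cr]. *)

Section Gordan.
Variable R : realFieldType.

Definition dotv n (u w : 'rV[R]_n) : R := \sum_(i < n) u 0 i * w 0 i.

Lemma dotv_sumr n (I : finType) (u : 'rV[R]_n) (l : I -> R) (w : I -> 'rV[R]_n) :
  dotv u (\sum_i l i *: w i) = \sum_i l i * dotv u (w i).
Proof.
rewrite /dotv (eq_bigr (fun k => \sum_i u 0 k * (l i * w i 0 k))); last first.
  by move=> k _; rewrite summxE mulr_sumr; apply: eq_bigr => i _; rewrite mxE.
rewrite exchange_big /=; apply: eq_bigr => i _; rewrite mulr_sumr.
by apply: eq_bigr => k _; rewrite mulrCA.
Qed.

Lemma dotvBr n (u a b : 'rV[R]_n) : dotv u (a - b) = dotv u a - dotv u b.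
Proof. by rewrite /dotv -sumrB; apply: eq_bigr => i _; rewrite !mxE mulrBr. Qed.

Lemma dotv0r n (u : 'rV[R]_n) : dotv u 0 = 0.
Proof. by rewrite /dotv big1 // => k _; rewrite mxE mulr0. Qed.

Definition row_head n (w : 'rV[R]_n.+1) : R := w 0 ord0.
Definition row_tail n (w : 'rV[R]_n.+1) : 'rV[R]_n := \row_(i < n) w 0 (lift ord0 i).
Definition row_cons n (s : R) (u : 'rV[R]_n) : 'rV[R]_n.+1 :=
  \row_(i < n.+1) (if unlift ord0 i is Some j then u 0 j else s).

Lemma dotv_row_cons n s (u : 'rV[R]_n) w :
  dotv (row_cons s u) w = s * row_head w + dotv u (row_tail w).
Proof.
rewrite /dotv big_ord_recl /row_head !mxE unlift_none; congr (_ + _).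
by apply: eq_bigr => i _; rewrite !mxE liftK.
Qed.

Lemma row_head_sum n (I : finType) (F : I -> 'rV[R]_n.+1) (l : I -> R) :
  row_head (\sum_i l i *: F i) = \sum_i l i * row_head (F i).
Proof. by rewrite /row_head summxE; apply: eq_bigr => i _; rewrite mxE. Qed.

Lemma row_tail_sum n (I : finType) (F : I -> 'rV[R]_n.+1) (l : I -> R) :
  row_tail (\sum_i l i *: F i) = \sum_i l i *: row_tail (F i).
Proof.
apply/rowP => k; rewrite !mxE summxE [RHS]summxE.
by apply: eq_bigr => i _; rewrite !mxE.
Qed.

Lemma row_head_tail_eq0 n (w : 'rV[R]_n.+1) :
  row_head w = 0 -> row_tail w = 0 -> w = 0.
Proof.
move=> h0 t0; apply/rowP => k; rewrite mxE.
case: (unliftP ord0 k) => [j ->|->]; last exact: h0.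
by have := congr1 (fun v : 'rV_n => v 0 j) t0; rewrite !mxE.
Qed.

Lemma sum_scale_delta (I : finType) n (w : I -> 'rV[R]_n) p :
  \sum_i (i == p)%:R *: w i = w p.
Proof.
rewrite (bigD1 p) //= eqxx scale1r big1 ?addr0 // => i /negbTE ->.
by rewrite scale0r.
Qed.

Lemma exists_separating_value (I : finType) (P N : pred I) (lo hi : I -> R) :
  (forall p q, P p -> N q -> lo q < hi p) ->
  exists s, (forall q, N q -> lo q < s) /\ (forall p, P p -> s < hi p).
Proof.
move=> lo_hi.
have [q0 Nq0|N0] := pickP N; last first.
  have [p0 Pp0|P0] := pickP P; last by exists 0; split => [q|p]; rewrite ?N0 ?P0.
  have [pm Ppm pm_min] := arg_minP hi Pp0.
  exists (hi pm - 1); split => [q|p Pp]; first by rewrite N0.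
  by have : hi pm <= hi p := pm_min p Pp; lra.
have [qm Nqm qm_max] := arg_maxP lo Nq0.
have [p0 Pp0|P0] := pickP P; last first.
  exists (lo qm + 1); split => [q Nq|p]; last by rewrite P0.
  by have : lo q <= lo qm := qm_max q Nq; lra.
have [pm Ppm pm_min] := arg_minP hi Pp0.
have gap := lo_hi _ _ Ppm Nqm.
exists ((lo qm + hi pm) / 2); split.
- by move=> q Nq; have : lo q <= lo qm := qm_max q Nq; lra.
- by move=> p Pp; have : hi pm <= hi p := pm_min p Pp; lra.
Qed.

Section FourierMotzkin.
Variables (n : nat) (I : finType) (w : I -> 'rV[R]_n.+1).
Local Notation h i := (row_head (w i)).

(* Eliminating the first coordinate: keep each [w p] with [h p = 0], and
   combine every [w p] with [h p > 0] and [w q] with [h q < 0] into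
   [- h q *: w p + h p *: w q], whose first coordinate vanishes. *)
Definition fm_pair (pq : I * I) : bool :=
  ((h pq.1 == 0) && (pq.1 == pq.2)) || ((0 < h pq.1) && (h pq.2 < 0)).

Definition fm_index := {pq : I * I | fm_pair pq}.

Definition fm_coef (i : I) (pq : I * I) : R :=
  if h pq.1 == 0 then (i == pq.1)%:R
  else (i == pq.1)%:R * - h pq.2 + (i == pq.2)%:R * h pq.1.

Definition fm_comb (pq : I * I) : 'rV[R]_n.+1 := \sum_i fm_coef i pq *: w i.

Lemma fm_combE pq : fm_comb pq =
  if h pq.1 == 0 then w pq.1 else (- h pq.2) *: w pq.1 + h pq.1 *: w pq.2.
Proof.
rewrite /fm_comb /fm_coef; case: eqP => _; first exact: sum_scale_delta.
under eq_bigr do rewrite scalerDl -!scalerA.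
by rewrite big_split /= !sum_scale_delta.
Qed.

Lemma row_head_fm_comb pq : fm_pair pq -> row_head (fm_comb pq) = 0.
Proof.
rewrite fm_combE /fm_pair; case: eqP => [//|_ _].
by rewrite /row_head !mxE; ring.
Qed.

Lemma fm_coef_ge0 (j : fm_index) i : 0 <= fm_coef i (val j).
Proof.
case: j => [[p q] /= /orP[/andP[hp0 _]|/andP[hp hq]]]; rewrite /fm_coef /=.
  by rewrite hp0 ler0n.
by rewrite gt_eqF //; apply: addr_ge0; apply: mulr_ge0; rewrite ?ler0n //; lra.
Qed.

Lemma fm_coef_gt0 (j : fm_index) : 0 < fm_coef (val j).1 (val j).
Proof.
case: j => [[p q] /= /orP[/andP[hp0 _]|/andP[hp hq]]]; rewrite /fm_coef /=.
  by rewrite hp0 eqxx ltr01.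
rewrite gt_eqF // eqxx mul1r; have [qp|_] := eqVneq q p.
  by rewrite qp in hq; lra.
by rewrite mul0r addr0; lra.
Qed.

Lemma fm_eliminate : (forall u, exists i, 0 <= dotv u (w i)) ->
  forall u : 'rV[R]_n, exists j : fm_index, 0 <= dotv u (row_tail (fm_comb (val j))).
Proof.
move=> w_hyp u; apply/not_existsP => all_neg.
have {}all_neg (j : fm_index) : dotv u (row_tail (fm_comb (val j))) < 0.
  by rewrite ltNge; apply/negP => /(all_neg j).
pose a i := dotv u (row_tail (w i)).
have bounds p q : 0 < h p -> h q < 0 -> - a q / h q < - a p / h p.
  move=> hp hq; have pq : fm_pair (p, q) by rewrite /fm_pair /= hp hq orbT.
  have := all_neg (exist _ (p, q) pq); rewrite /= fm_combE /= (gt_eqF hp).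
  have -> : (- h q) *: w p + h p *: w q = \sum_(i < 2) [:: - h q; h p]`_i *: [:: w p; w q]`_i.
    by rewrite !big_ord_recl big_ord0 addr0.
  rewrite row_tail_sum dotv_sumr !big_ord_recl big_ord0 addr0 /= -/(a p) -/(a q) => neg.
  by rewrite ltr_pdivlMr // mulrAC ltr_ndivrMr //; nra.
have [s [s_lo s_hi]] := exists_separating_value bounds.
have [i] := w_hyp (row_cons s u); rewrite dotv_row_cons -/(a i).
case: (ltrgt0P (h i)) => hi.
- by have := s_hi i hi; rewrite ltr_pdivlMr //; lra.
- by have := s_lo i hi; rewrite ltr_ndivrMr //; lra.
- have ii : fm_pair (i, i) by rewrite /fm_pair /= hi !eqxx.
  have := all_neg (exist _ (i, i) ii); rewrite /= fm_combE /= hi eqxx -/(a i); lra.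
Qed.

Lemma fm_lift (l' : fm_index -> R) :
  (forall j, 0 <= l' j) -> (exists j, 0 < l' j) ->
  \sum_j l' j *: row_tail (fm_comb (val j)) = 0 ->
  exists l : I -> R, [/\ forall i, 0 <= l i, exists i, 0 < l i &
    \sum_i l i *: w i = 0].
Proof.
move=> l'_ge0 [j0 l'j0] l'_sum.
have coef_ge0 i j : 0 <= l' j * fm_coef i (val j).
  by rewrite mulr_ge0 ?fm_coef_ge0.
exists (fun i => \sum_j l' j * fm_coef i (val j)); split.
- by move=> i; apply: sumr_ge0.
- exists (val j0).1; rewrite (bigD1 j0) //=; apply: ltr_pwDl.
    by rewrite mulr_gt0 ?fm_coef_gt0.
  exact: sumr_ge0.
have -> : \sum_i (\sum_j l' j * fm_coef i (val j)) *: w i =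
          \sum_j l' j *: fm_comb (val j).
  under eq_bigr do rewrite scaler_suml.
  rewrite exchange_big; apply: eq_bigr => j _.
  by rewrite /fm_comb scaler_sumr; apply: eq_bigr => i _; rewrite scalerA.
apply: row_head_tail_eq0; last by rewrite row_tail_sum.
by rewrite row_head_sum big1 // => j _; rewrite row_head_fm_comb ?mulr0 ?(valP j).
Qed.

End FourierMotzkin.

Theorem gordan n (I : finType) (w : I -> 'rV[R]_n) :
  (forall u, exists i, 0 <= dotv u (w i)) ->
  exists l : I -> R, [/\ forall i, 0 <= l i, exists i, 0 < l i &
    \sum_i l i *: w i = 0].
Proof.
elim: n I w => [|n IHn] I w w_hyp.
  have [i _] := w_hyp 0; exists (fun k => (k == i)%:R); split.
  - by move=> k; rewrite ler0n.
  - by exists i; rewrite eqxx ltr01.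
  - by apply/rowP => -[].
have [l' [l'_ge0 l'_pos l'_sum]] := IHn _ _ (fm_eliminate w_hyp).
exact: fm_lift l'_sum.
Qed.

End Gordan.

Lemma exists_subset_card (T : finType) (A : {set T}) k :
  (k <= #|A|)%N -> exists2 B : {set T}, B \subset A & #|B| = k.
Proof.
elim: k => [|k IH] Hk; first by exists set0; rewrite ?sub0set ?cards0.
have [B BA cB] := IH (ltnW Hk).
have : (0 < #|A :\: B|)%N by rewrite cardsD (setIidPr BA) cB subn_gt0.
case/card_gt0P => x; rewrite in_setD => /andP[xB xA].
exists (x |: B); first by rewrite subUset sub1set xA BA.
by rewrite cardsU1 xB cB.
Qed.

Lemma exists_subset_card_between (T : finType) (A B : {set T}) k :
  A \subset B -> (#|A| <= k)%N -> (k <= #|B|)%N ->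
  exists C : {set T}, [/\ A \subset C, C \subset B & #|C| = k].
Proof.
move=> AB Ak kB.
have : (k - #|A| <= #|B :\: A|)%N by rewrite cardsD (setIidPr AB); lia.
case/exists_subset_card => D DBA cD.
have AD : [disjoint A & D].
  by rewrite disjoint_sym disjoints_subset (subset_trans DBA) // setDE subsetIr.
exists (A :|: D); split; first exact: subsetUl.
  by rewrite subUset AB (subset_trans DBA) ?subsetDl.
by rewrite cardsU (disjoint_setI0 AD) cards0 subn0 cD; lia.
Qed.

Section ConicCaratheodory.
Variables (R : realFieldType) (k n : nat) (v : 'I_n -> 'rV[R]_k) (d : 'rV[R]_k).

Definition supp (b : 'I_n -> R) := [set j | b j != 0].

Definition nonneg_dependency (b : 'I_n -> R) (t : R) :=
  [/\ forall j, 0 <= b j, 0 <= t, t != 0 \/ (exists j, b j != 0) &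
      \sum_j b j *: v j = t *: d].

Definition vecs_mx (K : {set 'I_n}) : 'M[R]_(#|K|, k) :=
  \matrix_(i < #|K|) v (enum_val (A := K) i).

Definition coef_ext (K : {set 'I_n}) (l : 'rV[R]_#|K|) (j : 'I_n) : R :=
  \sum_(i < #|K|) (enum_val (A := K) i == j)%:R * l 0 i.

Lemma sum_coef_ext (K : {set 'I_n}) (l : 'rV[R]_#|K|) :
  \sum_j coef_ext l j *: v j = l *m vecs_mx K.
Proof.
apply/rowP => x; rewrite !mxE summxE.
under eq_bigr do rewrite !mxE mulr_suml.
rewrite exchange_big /=; apply: eq_bigr => i _.
rewrite (bigD1 (enum_val i)) //= eqxx mul1r big1 ?addr0 ?mxE // => j /negbTE.
by rewrite eq_sym => ->; rewrite !mul0r.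
Qed.

Lemma coef_ext_out (K : {set 'I_n}) (l : 'rV[R]_#|K|) j :
  j \notin K -> coef_ext l j = 0.
Proof.
move=> jK; rewrite /coef_ext big1 // => i _.
by case: eqP => [ej|]; [move: jK; rewrite -ej enum_valP | rewrite mul0r].
Qed.

Lemma coef_ext_val (K : {set 'I_n}) (l : 'rV[R]_#|K|) i :
  coef_ext l (enum_val i) = l 0 i.
Proof.
rewrite /coef_ext (bigD1 i) //= eqxx mul1r big1 ?addr0 // => i' ne.
by rewrite (inj_eq enum_val_inj) (negbTE ne) mul0r.
Qed.

Lemma exists_dependency_in (K : {set 'I_n}) : (\rank (vecs_mx K) < #|K|)%N ->
  exists g : 'I_n -> R, [/\ exists j, g j != 0, forall j, j \notin K -> g j = 0 &
     \sum_j g j *: v j = 0].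
Proof.
move=> rank_lt.
have : kermx (vecs_mx K) != 0 by rewrite kermx_eq0 /row_free neq_ltn rank_lt.
case/rowV0Pn => l /sub_kermxP l0 lnz.
have [i li] : exists i, l 0 i != 0.
  apply/existsP; apply: contraNT lnz => /existsPn l_eq0.
  by apply/eqP/rowP => i; rewrite mxE; apply/eqP/negPn/l_eq0.
exists (coef_ext l); split; first by exists (enum_val i); rewrite coef_ext_val.
  by move=> j; apply: coef_ext_out.
by rewrite sum_coef_ext l0.
Qed.

Lemma exists_neg_dependency_in (K : {set 'I_n}) : (k < #|K|)%N ->
  exists g : 'I_n -> R, [/\ exists j, g j < 0, forall j, j \notin K -> g j = 0 &
     \sum_j g j *: v j = 0].
Proof.
move=> K_large; have [|g [[j0 gj0] gK g_sum]] := exists_dependency_in (K := K).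
  exact: leq_ltn_trans (rank_leq_col _) K_large.
have [/existsP[j gj]|/existsPn g_ge0] := boolP [exists j, g j < 0].
  by exists g; split => //; exists j.
exists (fun j => - g j); split.
- by exists j0; rewrite oppr_lt0 lt_def gj0 /= leNgt g_ge0.
- by move=> j /gK ->; rewrite oppr0.
- by under eq_bigr do rewrite scaleNr; rewrite sumrN g_sum oppr0.
Qed.

Lemma exists_combination_in (K : {set 'I_n}) (x : 'rV[R]_k) :
  \rank (vecs_mx K) = k ->
  exists g : 'I_n -> R, (forall j, j \notin K -> g j = 0) /\ \sum_j g j *: v j = x.
Proof.
move=> full; have : (x <= vecs_mx K)%MS by apply: submx_full; rewrite /row_full full.
case/submxP => D ->; exists (coef_ext D); split; last exact: sum_coef_ext.
by move=> j; apply: coef_ext_out.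
Qed.

(* Subtracting the largest multiple of the dependency [g] keeping [b]
   nonnegative kills one coefficient of [b]. *)
Lemma nonneg_dependency_shrink b t g :
  nonneg_dependency b t -> (exists j, g j != 0) -> (forall j, b j = 0 -> g j = 0) ->
  \sum_j g j *: v j = 0 -> (t != 0 \/ exists2 j, b j != 0 & g j = 0) ->
  exists b', nonneg_dependency b' t /\ supp b' \proper supp b.
Proof.
move=> [b_ge0 t_ge0 nz b_sum] [j0 gj0] g_supp g_sum keep_nz.
wlog gj0_gt0 : g g_supp g_sum keep_nz {gj0} / 0 < g j0.
  move=> W; case: (ltrgt0P (g j0)) => [|gj0_lt0|/eqP]; [exact: W| |by rewrite (negbTE gj0)].
  apply: (W (fun j => - g j)); rewrite ?oppr_gt0 //=.
  - by move=> j /g_supp ->; rewrite oppr0.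
  - by under eq_bigr do rewrite scaleNr; rewrite sumrN g_sum oppr0.
  - by case: keep_nz => [|[j bj gj]]; [left|right; exists j; rewrite ?gj ?oppr0].
have [jm gjm_gt0 jm_min] := arg_minP (P := fun j => 0 < g j) (fun j => b j / g j) gj0_gt0.
set s := b jm / g jm.
have s_ge0 : 0 <= s by rewrite divr_ge0 ?b_ge0 ?ltW.
pose b' j := b j - s * g j.
have b'_ge0 j : 0 <= b' j.
  rewrite /b' subr_ge0; case: (ltrP 0 (g j)) => gj.
    by have : s <= b j / g j := jm_min j gj; rewrite ler_pdivlMr // mulrC.
  by apply: le_trans (b_ge0 j); rewrite -(mulr0 s) ler_wpM2l.
have b'jm : b' jm = 0 by rewrite /b' /s divfK ?subrr // gt_eqF.
have sub : supp b' \subset supp b.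
  apply/subsetP => j; rewrite !inE /b'; apply: contraNneq => bj.
  by rewrite bj (g_supp j bj) mulr0 subr0.
exists b'; split.
  split => //.
    by case: keep_nz => [|[j bj gj]]; [left|right; exists j; rewrite /b' gj mulr0 subr0].
  under eq_bigr do rewrite /b' scalerBl -scalerA.
  by rewrite sumrB -scaler_sumr g_sum scaler0 subr0.
rewrite properE sub /=; apply/subsetPn; exists jm; last by rewrite inE b'jm eqxx.
by rewrite inE; apply: contraTneq gjm_gt0 => /g_supp ->; rewrite ltxx.
Qed.

(* When [0] is a positive combination of the [v j], adding a suitable
   multiple of that combination to any expression of [d] yields one with
   nonnegative coefficients and smaller support. *)
Lemma nonneg_dependency_rebase b mu :
  nonneg_dependency b 0 -> (forall j, b j = 0 -> mu j = 0) ->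
  \sum_j mu j *: v j = d ->
  exists b', nonneg_dependency b' 1 /\ supp b' \proper supp b.
Proof.
move=> [b_ge0 _ [/eqP//|[j0 bj0]] b_sum] mu_supp mu_sum.
have j0b : j0 \in supp b by rewrite inE.
have b_pos j : j \in supp b -> 0 < b j by rewrite inE lt_def => ->; apply: b_ge0.
have [jm jmb jm_max] := arg_maxP (P := mem (supp b)) (fun j => - mu j / b j) j0b.
set s := - mu jm / b jm.
pose b' j := mu j + s * b j.
have b'_ge0 j : 0 <= b' j.
  rewrite /b'; have [jb|jb] := boolP (j \in supp b).
    by have : - mu j / b j <= s := jm_max j jb; rewrite ler_pdivrMr ?b_pos //; lra.
  by move: jb; rewrite inE negbK => /eqP bj; rewrite bj mu_supp // mulr0 addr0.
have b'jm : b' jm = 0 by rewrite /b' /s divfK ?addrN // gt_eqF ?b_pos.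
have sub : supp b' \subset supp b.
  apply/subsetP => j; rewrite !inE; apply: contraNneq => bj.
  by rewrite /b' bj mulr0 addr0 mu_supp.
exists b'; split.
  split => //; first by left; rewrite oner_eq0.
  under eq_bigr do rewrite /b' scalerDl -scalerA.
  by rewrite big_split /= -scaler_sumr mu_sum b_sum !scale0r scaler0 addr0 scale1r.
by rewrite properE sub /=; apply/subsetPn; exists jm; rewrite // inE b'jm eqxx.
Qed.

Lemma nonneg_dependency_small b t : nonneg_dependency b t ->
  exists b' t', [/\ nonneg_dependency b' t', (#|supp b'| <= k)%N & supp b' \subset supp b].
Proof.
elim: {b}_.+1 {-2}b t (ltnSn #|supp b|) => // N IH b t Nb dep_b.
have [small|large] := leqP #|supp b| k; first by exists b, t.
have recurse b' t' : nonneg_dependency b' t' -> supp b' \proper supp b ->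
    exists b'' t'', [/\ nonneg_dependency b'' t'', (#|supp b''| <= k)%N & supp b'' \subset supp b].
  move=> dep_b' sub; have := leq_trans (proper_card sub) Nb.
  move=> /IH /(_ dep_b') [b'' [t'' [? ? sub']]].
  by exists b'', t''; split => //; apply: subset_trans sub' (proper_sub sub).
have in_supp (K : {set 'I_n}) (g : 'I_n -> R) : K \subset supp b ->
    (forall j, j \notin K -> g j = 0) -> forall j, b j = 0 -> g j = 0.
  move=> Kb gK j bj; apply: gK; apply/negP => /(subsetP Kb).
  by rewrite inE bj eqxx.
have [t0|t_nz] := eqVneq t 0; last first.
  have [K Kb cK] := exists_subset_card large.
  have [|g [g_nz gK g_sum]] := exists_dependency_in (K := K).
    by rewrite [X in (_ < X)%N]cK ltnS rank_leq_col.
  have [b' [dep_b' sub]] :=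
    nonneg_dependency_shrink dep_b g_nz (in_supp K g Kb gK) g_sum (or_introl t_nz).
  exact: recurse dep_b' sub.
have [K Kb cK] := exists_subset_card (ltnW large).
have [rank_lt|rank_ge] := ltnP (\rank (vecs_mx K)) #|K|.
  have [g [g_nz gK g_sum]] := exists_dependency_in rank_lt.
  have outside : exists2 j, b j != 0 & g j = 0.
    have /card_gt0P[j] : (0 < #|supp b :\: K|)%N by rewrite cardsD (setIidPr Kb) cK subn_gt0.
    by rewrite !inE => /andP[/gK gj bj]; exists j.
  have [b' [dep_b' sub]] := nonneg_dependency_shrink dep_b g_nz (in_supp K g Kb gK) g_sum
    (or_intror outside).
  exact: recurse dep_b' sub.
have : \rank (vecs_mx K) = k
  by apply/eqP; rewrite eqn_leq rank_leq_col (leq_trans _ rank_ge) ?cK.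
case/(exists_combination_in d) => mu [muK mu_sum].
move: dep_b; rewrite t0 => dep_b.
have [b' [dep_b' sub]] := nonneg_dependency_rebase dep_b (in_supp K mu Kb muK) mu_sum.
exact: recurse dep_b' sub.
Qed.

End ConicCaratheodory.

Section Counting.
Local Open Scope nat_scope.

Lemma card_set_sum (T : finType) (P : pred T) : #|[set x | P x]| = \sum_x P x.
Proof. by rewrite -sum1dep_card big_mkcond; apply: eq_bigr => x _; case: (P x). Qed.

Lemma card_le_sum_cover (T I : finType) (S : {set T}) (P : pred I) (Q : I -> {set T}) :
  (forall x, x \in S -> exists2 i, P i & x \in Q i) -> #|S| <= \sum_(i | P i) #|Q i|.
Proof.
move=> cover; rewrite -sum1_card.
apply: (@leq_trans (\sum_x \sum_(i | P i) (x \in Q i))).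
  rewrite [X in _ <= X](bigID (mem S)) /= -[X in X <= _]addn0 leq_add //.
  apply: leq_sum => x /cover[i Pi xQ]; rewrite (bigD1 i) //= xQ.
  exact: leq_addr.
rewrite exchange_big; apply: leq_sum => i _; rewrite -card_set_sum.
by apply/eq_leq/eq_card => x; rewrite inE.
Qed.

Lemma card_ffun_prod (aT rT : finType) (F : aT -> pred rT) :
  #|[set g : {ffun aT -> rT} | [forall x, g x \in F x]]| = \prod_x #|F x|.
Proof.
have -> : #|[set g : {ffun aT -> rT} | [forall x, g x \in F x]]| = #|family F|.
  by apply: eq_card => g; rewrite inE; apply/forallP/familyP.
rewrite card_family /image_mem.
transitivity (\prod_(x <- enum aT) #|F x|); last by rewrite big_enum.
by elim: (enum aT) => [|x e IH] /=; rewrite ?big_nil ?big_cons ?IH.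
Qed.

Lemma card_ffun_fixed (aT rT : finType) (P : {set aT}) (val : aT -> rT) :
  #|[set g : {ffun aT -> rT} | [forall x in P, g x == val x]]| = #|rT| ^ (#|aT| - #|P|).
Proof.
pose F x := if x \in P then pred1 (val x) else predT.
rewrite (eq_card (B := [set g : {ffun aT -> rT} | [forall x, g x \in F x]])); last first.
  move=> g; rewrite !inE; apply/forallP/forallP => /= g_val x; move: (g_val x);
  by rewrite /F; case: (x \in P) => //=; rewrite inE.
rewrite card_ffun_prod (bigID (mem P)) /= big1 => [|x xP]; last by rewrite /F xP card1.
rewrite mul1n (eq_bigr (fun=> #|rT|)) => [|x /negbTE xP]; last by rewrite /F xP.
rewrite -(cardsC P) addKn -prod_nat_const.
by apply: eq_bigl => x; rewrite inE.
Qed.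

End Counting.

Section SauerShelah.
Local Open Scope nat_scope.
Variable T : finType.

Definition shatters (G : {set {set T}}) (W : {set T}) :=
  forall Y : {set T}, Y \subset W -> exists2 B, B \in G & B :&: W = Y.

Lemma shatters_set0 (G : {set {set T}}) : G != set0 -> shatters G set0.
Proof.
by case/set0Pn => B BG Y; rewrite subset0 => /eqP ->; exists B; rewrite ?setI0.
Qed.

Lemma sum_binS s d :
  \sum_(i < d.+1) 'C(s.+1, i) = \sum_(i < d.+1) 'C(s, i) + \sum_(i < d) 'C(s, i).
Proof.
rewrite big_ord_recl [in X in _ = X + _]big_ord_recl !bin0 -addnA; congr (_ + _).
by rewrite -big_split /=; apply: eq_bigr => i _; rewrite binS.
Qed.

Section Compression.
Variables (G : {set {set T}}) (x : T).

Let G0 := [set B in G | x \notin B].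
Let G1 := [set B in G | x \in B].

(* The traces of [G] on the complement of [x], and those traces [B] for
   which both [B] and [x |: B] are in [G]. *)
Definition trace_del := G0 :|: [set B :\ x | B in G1].
Definition trace_twins := G0 :&: [set B :\ x | B in G1].

Lemma card_trace_del_twins : #|G| = #|trace_del| + #|trace_twins|.
Proof.
have inj : {in G1 &, injective (fun B => B :\ x)}.
  move=> B1 B2; rewrite !inE => /andP[_ x1] /andP[_ x2] e.
  by rewrite -(setD1K x1) -(setD1K x2) e.
rewrite cardsUI card_in_imset // -(cardsID [set B : {set T} | x \in B] G) addnC.
by congr (_ + _); apply: eq_card => B; rewrite !inE andbC.
Qed.

Lemma trace_twins_sub : trace_twins \subset trace_del.
Proof. exact: subset_trans (subsetIl _ _) (subsetUl _ _). Qed.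

Lemma trace_del_sub (S : {set T}) : {in G, forall B : {set T}, B \subset S} ->
  {in trace_del, forall B : {set T}, B \subset S :\ x}.
Proof.
move=> GS B; rewrite !inE => /orP[/andP[BG xB]|/imsetP[C]].
  by rewrite subsetD1 GS.
by rewrite !inE => /andP[CG _] ->; rewrite setSD ?GS.
Qed.

Lemma shatters_trace_del (W : {set T}) : x \notin W -> shatters trace_del W -> shatters G W.
Proof.
move=> xW sh Y /sh[B]; rewrite !inE => /orP[/andP[BG _]|/imsetP[C]]; first by exists B.
rewrite !inE => /andP[CG _] -> <-; exists C => //.
apply/setP => y; rewrite !inE; case: eqP => // ->.
by rewrite (negbTE xW) andbF.
Qed.

Lemma shatters_trace_twins (W : {set T}) :
  x \notin W -> shatters trace_twins W -> shatters G (x |: W).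
Proof.
move=> xW sh Y YW.
have [|B] := sh (Y :\ x); first by rewrite subDset.
rewrite !inE => /andP[/andP[BG xB] /imsetP[C]]; rewrite !inE => /andP[CG xC] eB BW.
have eC : C = x |: B by rewrite eB setD1K.
have [xY|xY] := boolP (x \in Y).
  exists C => //; apply/setP => y; move/setP: BW => /(_ y); rewrite eC !inE.
  by case: (eqVneq y x) => [->|yx] /=; rewrite ?xY ?(negbTE xB) ?(negbTE xW) //= => ->.
exists B => //; apply/setP => y; move/setP: BW => /(_ y); rewrite !inE.
by case: (eqVneq y x) => [->|yx] /=; rewrite ?(negbTE xB) ?(negbTE xY).
Qed.

End Compression.

Theorem sauer_shelah (S : {set T}) (G : {set {set T}}) d :
  {in G, forall B : {set T}, B \subset S} ->
  (forall W : {set T}, W \subset S -> #|W| = d -> ~ shatters G W) ->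
  #|G| <= \sum_(i < d) 'C(#|S|, i).
Proof.
have [s cS] : {s | #|S| = s} by exists #|S|.
rewrite cS; elim: s S G d cS => [|s IH] S G [|d] cS GS no_sh.
- have /eqP -> : G == set0.
    by apply: contraT => /shatters_set0 /(no_sh _ (sub0set _) (cards0 _)).
  by rewrite cards0.
- have /eqP S0 : S == set0 by rewrite -cards_eq0 cS.
  rewrite big_ord_recl bin0 (leq_trans _ (leq_addr _ _)) //.
  have : G \subset [set set0] by apply/subsetP => B /GS; rewrite S0 subset0 inE.
  by move/subset_leq_card; rewrite cards1.
- have /eqP -> : G == set0.
    by apply: contraT => /shatters_set0 /(no_sh _ (sub0set _) (cards0 _)).
  by rewrite cards0.
have /card_gt0P[x xS] : 0 < #|S| by rewrite cS.
have cSx : #|S :\ x| = s by move: cS; rewrite (cardsD1 x S) xS => -[].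
have xSx : x \notin S :\ x by rewrite !inE eqxx.
have sub_notx (W : {set T}) : W \subset S :\ x -> x \notin W.
  by move=> WS; apply/negP => /(subsetP WS); apply/negP.
rewrite (card_trace_del_twins G x) sum_binS; apply: leq_add.
  apply: IH cSx (trace_del_sub GS) _ => W WS cW /(shatters_trace_del (sub_notx W WS)).
  by apply: no_sh cW; apply: subset_trans WS (subD1set _ _).
apply: IH cSx _ _ => [B /(subsetP (trace_twins_sub G x))|W WS cW].
  exact: trace_del_sub GS B.
move/(shatters_trace_twins (sub_notx W WS)); apply: no_sh.
  by rewrite subUset sub1set xS (subset_trans WS (subD1set _ _)).
by rewrite cardsU1 sub_notx // cW.
Qed.

End SauerShelah.

Section EpsilonNet.
Local Open Scope nat_scope.
Variables (n j d : nat).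
Local Notation m := (8 * j).
Variable F : {set {set 'I_n}}.
Hypothesis F_large : forall A, A \in F -> n <= 4 * #|A|.
Hypothesis F_vc : forall W : {set 'I_n}, #|W| = d -> ~ shatters F W.
Hypothesis j_gt0 : 0 < j.

Local Notation sample := {ffun 'I_m -> 'I_n}.

Definition hits (g : sample) (A : {set 'I_n}) := #|[set i | g i \in A]|.

Lemma card_sample_at (i : 'I_m) (P : {set 'I_n}) :
  #|[set g : sample | g i \in P]| = #|P| * n ^ m.-1.
Proof.
pose at_i x := if x == i then [pred y in P] else predT.
rewrite (eq_card (B := [set g : sample | [forall x, g x \in at_i x]])).
  rewrite card_ffun_prod (bigD1 i) //= /at_i eqxx; congr (_ * _).
  rewrite (eq_bigr (fun=> n)) => [|x /negbTE ->]; last by rewrite card_ord.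
  by rewrite prod_nat_const cardC1 card_ord.
move=> g; rewrite !inE /at_i; apply/idP/forallP => [gi x|/(_ i)]; last by rewrite eqxx.
by case: eqP => [->|].
Qed.

Lemma sum_misses (A : {set 'I_n}) :
  \sum_(g : sample) #|[set i | g i \notin A]| = m * (#|~: A| * n ^ m.-1).
Proof.
under eq_bigr do rewrite card_set_sum.
rewrite exchange_big /= (eq_bigr (fun=> #|~: A| * n ^ m.-1)) => [|i _].
  by rewrite sum_nat_const card_ord.
by rewrite -(card_sample_at i) card_set_sum; apply: eq_bigr => g _; rewrite inE.
Qed.

(* Markov's inequality for the number of misses, whose mean is at most [6 j]. *)
Lemma card_sample_hits A : A \in F -> n ^ m <= 7 * #|[set g : sample | j <= hits g A]|.
Proof.
move=> AF; have A_large := F_large AF.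
set X := n ^ m; set G := [set g : sample | _].
set B := [set g : sample | hits g A < j].
have cA : #|A| + #|~: A| = n by rewrite cardsC card_ord.
have cGB : #|G| + #|B| = X.
  have <- : #|{: sample}| = X by rewrite card_ffun !card_ord.
  rewrite -(cardsC G); congr (_ + _).
  by apply: eq_card => g; rewrite !inE ltnNge.
have nX : n * n ^ m.-1 = X by rewrite -expnS prednK ?muln_gt0.
have missesB : #|B| * (7 * j + 1) <= m * (#|~: A| * n ^ m.-1).
  rewrite -sum_misses -sum_nat_const [X in _ <= X](bigID (mem B)) /=.
  apply: leq_trans (leq_addr _ _) ; apply: leq_sum => g; rewrite inE => gB.
  suff : hits g A + #|[set i | g i \notin A]| = m.
    by move: (hits g A) gB (#|_|) => h hj k; lia.
  rewrite -[RHS](card_ord m) -(cardsC [set i | g i \in A]); congr (_ + _).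
  by apply: eq_card => i; rewrite !inE.
have c_small : 4 * #|~: A| <= 3 * n by lia.
have {}c_small := leq_mul (leqnn (m * n ^ m.-1)) c_small.
have : j * (7 * #|B|) <= j * (6 * X) by rewrite -nX; lia.
rewrite leq_pmul2l //; lia.
Qed.

Definition missing := [set g : sample | [exists A in F, [forall i, g i \notin A]]].

Definition missing_pairs := [set p : sample * sample |
  [exists A in F, [forall i, p.1 i \notin A] && (j <= hits p.2 A)]].

Lemma card_missing_pairs_lb : #|missing| * n ^ m <= 7 * #|missing_pairs|.
Proof.
pose W (g : sample) := odflt set0 [pick A in F | [forall i, g i \notin A]].
have W_missed g : g \in missing -> W g \in F /\ forall i, g i \notin W g.
  rewrite inE => /existsP[A /andP[AF gA]]; rewrite /W.
  case: pickP => [A' /andP[A'F /forallP gA']|/(_ A)] /=; first by split.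
  by rewrite AF gA.
pose S := [set p : sample * sample | (p.1 \in missing) && (j <= hits p.2 (W p.1))].
have S_sub : S \subset missing_pairs.
  apply/subsetP => -[g g']; rewrite inE /= => /andP[/W_missed[WF gW] hj].
  by rewrite inE; apply/existsP; exists (W g); rewrite WF hj andbT; apply/forallP.
have cS : #|S| = \sum_(g in missing) #|[set g' : sample | j <= hits g' (W g)]|.
  rewrite card_set_sum.
  rewrite -(pair_big predT predT (fun g g' => ((g \in missing) && (j <= hits g' (W g)) : nat))) /=.
  rewrite [RHS]big_mkcond /=; apply: eq_bigr => g _.
  by case: (g \in missing) => /=; [rewrite card_set_sum | rewrite big1].
apply: leq_trans (leq_mul (leqnn 7) (subset_leq_card S_sub)).
rewrite cS big_distrr /= -sum_nat_const; apply: leq_sum => g gm.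
exact: card_sample_hits (proj1 (W_missed g gm)).
Qed.

Definition swap (s : {ffun 'I_m -> bool}) (p : sample * sample) : sample * sample :=
  ([ffun i => if s i then p.2 i else p.1 i], [ffun i => if s i then p.1 i else p.2 i]).

Lemma swapK s : involutive (swap s).
Proof.
by move=> [g g']; congr (_, _); apply/ffunP => i; rewrite !ffunE; case: (s i).
Qed.

Definition swaps_missing (p : sample * sample) (B : {set 'I_n}) :=
  [set s : {ffun 'I_m -> bool} |
    [forall i, (swap s p).1 i \notin B] && (j <= hits (swap s p).2 B)].

(* Such a swap is forced at each of the at least [j] positions where exactly
   one of [p.1 i], [p.2 i] lies in [B]. *)
Lemma card_swaps_missing p B : #|swaps_missing p B| <= 2 ^ (m - j).
Proof.
have [/existsP[i /andP[h1 h2]]|none_both] := boolP [exists i, (p.1 i \in B) && (p.2 i \in B)].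
  rewrite (_ : swaps_missing p B = set0) ?cards0 //.
  apply/setP => s; rewrite !inE; apply/negP => /andP[/forallP/(_ i)].
  by rewrite ffunE; case: (s i); rewrite ?h1 ?h2.
have [/eqP->|/set0Pn[s0]] := boolP (swaps_missing p B == set0); first by rewrite cards0.
set K := [set i | (p.1 i \in B) != (p.2 i \in B)].
rewrite inE => /andP[/forallP s0_miss s0_hits].
have hK : j <= #|K|.
  apply: leq_trans s0_hits _; apply: subset_leq_card; apply/subsetP => i; rewrite !inE !ffunE.
  move: (s0_miss i) (negP (existsPn none_both i)); rewrite !ffunE.
  by case: (s0 i); case: (p.1 i \in B); case: (p.2 i \in B).
have forced : swaps_missing p B \subset [set s : {ffun 'I_m -> bool} |
    [forall i, s i \in if i \in K then pred1 (p.1 i \in B) else predT]].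
  apply/subsetP => s; rewrite !inE => /andP[/forallP s_miss _]; apply/forallP => i.
  case: ifP => // iK; rewrite inE; move: iK (s_miss i); rewrite !inE !ffunE.
  by case: (s i); case: (p.1 i \in B); case: (p.2 i \in B).
apply: leq_trans (subset_leq_card forced) _; rewrite card_ffun_prod.
rewrite (bigID (mem K)) /= big1 => [|i iK]; last by rewrite iK card1.
rewrite mul1n (eq_bigr (fun=> 2)) => [|i /negbTE ->]; last by rewrite card_bool.
rewrite (eq_bigl (mem (~: K))) => [|i]; last exact: esym (in_setC i K).
rewrite prod_nat_const leq_pexp2l //.
by have := cardsC K; rewrite card_ord; lia.
Qed.

Definition shatter_bound := \sum_(i < d) 'C(2 * m, i).

Lemma card_trace (S : {set 'I_n}) : #|S| <= 2 * m ->
  #|[set A :&: S | A in F]| <= shatter_bound.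
Proof.
move=> cS; apply: leq_trans (sauer_shelah (S := S) _ _) _.
- by move=> B /imsetP[A _ ->]; apply: subsetIr.
- move=> W WS cW sh; apply: (F_vc cW) => Y /sh[B /imsetP[A AF ->] BW].
  by exists A => //; rewrite -BW -setIA (setIidPr WS).
- by apply: leq_sum => i _; apply: leq_bin2l.
Qed.

Lemma card_swaps_bad p : #|[set s | swap s p \in missing_pairs]| <= shatter_bound * 2 ^ (m - j).
Proof.
set S := [set y | [exists i, (p.1 i == y) || (p.2 i == y)]].
have cS : #|S| <= 2 * m.
  have : S \subset (p.1 @: setT) :|: (p.2 @: setT).
    by apply/subsetP => y; rewrite !inE => /existsP[i /orP[]/eqP <-]; rewrite imset_f ?orbT.
  move/subset_leq_card/leq_trans; apply; apply: leq_trans (leq_card_setU _ _) _.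
  by rewrite mul2n -addnn leq_add // (leq_trans (leq_imset_card _ _)) // cardsT card_ord.
have in_S s i : (swap s p).2 i \in S.
  by rewrite !ffunE !inE; apply/existsP; exists i; case: (s i); rewrite eqxx ?orbT.
apply: leq_trans (card_le_sum_cover (P := mem [set A :&: S | A in F]) (Q := swaps_missing p) _) _.
  move=> s; rewrite !inE => /existsP[A /andP[AF /andP[/forallP miss hit]]].
  exists (A :&: S); first exact: imset_f.
  rewrite inE; apply/andP; split; first by apply/forallP => i; rewrite inE negb_and miss.
  apply: leq_trans hit _; apply: subset_leq_card; apply/subsetP => i.
  by rewrite !inE => ->; have := in_S s i; rewrite inE.
apply: (@leq_trans (\sum_(B in [set A :&: S | A in F]) 2 ^ (m - j))).
  by apply: leq_sum => B _; apply: card_swaps_missing.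
by rewrite sum_nat_const leq_mul2r card_trace ?orbT.
Qed.

Lemma card_missing_pairs_ub : 2 ^ j * #|missing_pairs| <= n ^ m * n ^ m * shatter_bound.
Proof.
have swap_count : \sum_(s : {ffun 'I_m -> bool}) #|[set p | swap s p \in missing_pairs]| =
    2 ^ m * #|missing_pairs|.
  rewrite (eq_bigr (fun=> #|missing_pairs|)); last first.
    move=> s _; rewrite -(card_preimset missing_pairs (can_inj (swapK s))).
    by apply: eq_card => q; rewrite !inE.
  by rewrite sum_nat_const card_ffun card_bool card_ord.
have : \sum_(s : {ffun 'I_m -> bool}) #|[set p | swap s p \in missing_pairs]| <=
    n ^ m * n ^ m * (shatter_bound * 2 ^ (m - j)).
  under eq_bigr do rewrite card_set_sum.
  rewrite exchange_big /=; under eq_bigr do rewrite -card_set_sum.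
  apply: (@leq_trans (\sum_(p : sample * sample) shatter_bound * 2 ^ (m - j))).
    by apply: leq_sum => p _; apply: card_swaps_bad.
  by rewrite sum_nat_const card_prod card_ffun !card_ord.
rewrite swap_count -[m in 2 ^ m](subnK (leq_pmull _ (isT : 0 < 8))) expnD.
rewrite -(leq_pmul2l (expn_gt0 2 (m - j))); nia.
Qed.

(* The epsilon-net theorem for [epsilon = 1/4] and samples of size [8 j]. *)
Theorem card_missing : 28 * shatter_bound <= 2 ^ j -> 4 * #|missing| <= n ^ m.
Proof.
move=> j_large.
have missing_le : #|missing| <= n ^ m.
  have <- : #|{: sample}| = n ^ m by rewrite card_ffun !card_ord.
  by rewrite -cardsT subset_leq_card ?subsetT.
have [X0|X_gt0] := posnP (n ^ m); first by move: missing_le; rewrite X0; lia.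
have T_gt0 : 0 < 2 ^ j by rewrite expn_gt0.
have := leq_mul card_missing_pairs_lb (leqnn (2 ^ j)).
have := leq_mul (leqnn 7) card_missing_pairs_ub.
have := leq_mul (leqnn (n ^ m * n ^ m)) j_large.
move: (n ^ m) (2 ^ j) #|missing| #|missing_pairs| shatter_bound X_gt0 T_gt0.
move=> X T M P S X_gt0 T_gt0 h1 h2 h3.
have : 4 * M * (X * T) <= X * (X * T) by lia.
by rewrite leq_pmul2r ?muln_gt0 ?X_gt0.
Qed.

End EpsilonNet.

Section FunctionCounting.
Local Open Scope nat_scope.
Variables aT rT : finType.

Lemma card_ffun_noninjective :
  #|[set g : {ffun aT -> rT} | ~~ injectiveb g]| <= #|aT| ^ 2 * #|rT| ^ #|aT|.-1.
Proof.
have [aT_le1|aT_ge2] := leqP #|aT| 1.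
  rewrite (_ : [set g | _] = set0) ?cards0 //; apply/setP => g; rewrite !inE.
  apply/negbTE/negPn/injectiveP => x y _.
  by have /fintype_le1P all_eq := aT_le1; rewrite !(all_eq x).
pose Q (t : aT * aT * rT) :=
  [set g : {ffun aT -> rT} | [forall x in [set t.1.1; t.1.2], g x == t.2]].
apply: leq_trans (card_le_sum_cover (P := fun t : aT * aT * rT => t.1.1 != t.1.2) (Q := Q) _) _.
  move=> g; rewrite inE => /injectivePn[x [y xy gxy]].
  exists ((x, y), g x) => //; rewrite inE; apply/forall_inP => z.
  by rewrite !inE => /orP[]/eqP ->; rewrite ?gxy.
apply: (@leq_trans (\sum_(t : aT * aT * rT) #|rT| ^ (#|aT| - 2))).
  rewrite [X in _ <= X](bigID (fun t : aT * aT * rT => t.1.1 != t.1.2)) /=.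
  apply: leq_trans (leq_addr _ _); apply: leq_sum => -[[x y] a] /= xy.
  by rewrite (card_ffun_fixed _ (fun=> a)) cards2 xy.
by rewrite sum_nat_const !card_prod -mulnA -expnS -subSn // subSS subn1 mulnn.
Qed.

Lemma card_ffun_covering (T : {set rT}) :
  #|[set g : {ffun aT -> rT} | T \subset [set g x | x in aT]]| <=
    #|aT| ^ #|T| * #|rT| ^ (#|aT| - #|T|).
Proof.
pose Q (h : {ffun 'I_#|T| -> aT}) :=
  [set g : {ffun aT -> rT} | [forall i, g (h i) == enum_val i]].
apply: leq_trans (card_le_sum_cover (P := fun h : {ffun 'I_#|T| -> aT} => injectiveb h)
  (Q := Q) _) _.
  move=> g; rewrite inE => /subsetP Tg.
  have [h gh] : exists h : 'I_#|T| -> aT, forall i, g (h i) = enum_val i.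
    apply: (@fin_all_exists _ (fun=> aT) (fun i x => g x = enum_val i)) => i.
    by have /imsetP[x _ ->] := Tg _ (enum_valP i); exists x.
  exists [ffun i => h i]; last by rewrite inE; apply/forallP => i; rewrite ffunE gh.
  by apply/injectiveP => i i' /(congr1 g); rewrite !ffunE !gh => /enum_val_inj.
apply: (@leq_trans (\sum_(h : {ffun 'I_#|T| -> aT} | injectiveb h) #|rT| ^ (#|aT| - #|T|))).
  apply: leq_sum => h /injectiveP h_inj.
  have [->|/set0Pn[g0 g0Q]] := eqVneq (Q h) set0; first by rewrite cards0.
  have <- : #|[set h i | i in 'I_#|T|]| = #|T| by rewrite card_imset // card_ord.
  rewrite -(card_ffun_fixed _ g0); apply/subset_leq_card/subsetP => g.
  move: g0Q; rewrite !inE => /forallP g0h /forallP gh.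
  by apply/forall_inP => _ /imsetP[i _ ->]; rewrite (eqP (gh i)) (eqP (g0h i)).
rewrite sum_nat_const leq_mul2r; apply/orP; right.
by apply: leq_trans (max_card _) _; rewrite card_ffun card_ord.
Qed.

Lemma card_ffun_covered k (Tr : {set {set rT}}) (G : {set {ffun aT -> rT}}) :
  {in Tr, forall T : {set rT}, #|T| = k} ->
  (forall g, g \in G -> exists2 T, T \in Tr & T \subset [set g x | x in aT]) ->
  #|G| <= #|Tr| * (#|aT| ^ k * #|rT| ^ (#|aT| - k)).
Proof.
move=> Tr_k G_cov.
apply: leq_trans (card_le_sum_cover (P := mem Tr) (Q := fun T => [set g : {ffun aT -> rT} |
  T \subset [set g x | x in aT]]) _) _.
  by move=> g /G_cov[T TTr Tg]; exists T; rewrite ?inE.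
rewrite -sum_nat_const; apply: leq_sum => T /Tr_k <-.
exact: card_ffun_covering.
Qed.

Lemma card_injective_avoiding (B : {set {ffun aT -> rT}}) :
  4 * #|B| <= #|rT| ^ #|aT| -> 4 * #|aT| ^ 2 <= #|rT| ->
  #|rT| ^ #|aT| <= 2 * #|[set g : {ffun aT -> rT} | injectiveb g && (g \notin B)]|.
Proof.
move=> B_small aT_small.
have noninj_small : 4 * #|[set g : {ffun aT -> rT} | ~~ injectiveb g]| <= #|rT| ^ #|aT|.
  apply: leq_trans (leq_mul (leqnn 4) card_ffun_noninjective) _.
  case: #|aT| aT_small => [|a] aT_small; first by rewrite muln0.
  by rewrite succnK mulnA [#|rT| ^ _.+1]expnS leq_mul2r aT_small orbT.
have cover : [set: {ffun aT -> rT}] \subset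
    [set g : {ffun aT -> rT} | injectiveb g && (g \notin B)] :|: B :|:
    [set g : {ffun aT -> rT} | ~~ injectiveb g].
  apply/subsetP => g _; rewrite !inE.
  by case: (injectiveb g); case: (g \in B).
have := subset_leq_card cover; rewrite cardsT card_ffun.
move/leq_trans/(_ (leq_trans (leq_card_setU _ _) (leq_add (leq_card_setU _ _) (leqnn _)))).
move: B_small noninj_small.
by move: (#|rT| ^ #|aT|) #|B| #|[set g | ~~ _]| #|[set g | _ && _]| => X b N G; lia.
Qed.

End FunctionCounting.

Section SampleSize.
Local Open Scope nat_scope.

Lemma bin_le_exp2 j k : 'C(j, k) <= 2 ^ j.
Proof.
have := card_draws 'I_j k; rewrite card_ord => <-.
rewrite -[j in 2 ^ j](card_ord j) -cardsT -card_powerset.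
by apply/subset_leq_card/subsetP => A _; rewrite powersetE subsetT.
Qed.

Lemma bin_le_exp N i : 'C(N, i) <= N ^ i.
Proof.
elim: N i => [|N IH] [|i] //.
rewrite binS; apply: leq_trans (leq_add (IH i.+1) (IH i)) _.
have NS : N ^ i <= N.+1 ^ i by case: i => // i; rewrite leq_exp2r.
by rewrite [N.+1 ^ i.+1]expnS [N ^ i.+1]expnS mulSn addnC leq_add // leq_mul.
Qed.

Lemma shatter_bound4_le j : 2 ^ 27 <= j -> 28 * shatter_bound j 4 <= 2 ^ j.
Proof.
move=> j_large; apply: leq_trans (bin_le_exp2 j 4).
have sb : shatter_bound j 4 <= 4 * (16 * j) ^ 3.
  apply: (@leq_trans (\sum_(i < 4) (16 * j) ^ 3)); last by rewrite big_const_ord /=; lia.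
  apply: leq_sum => i _; apply: leq_trans (bin_le_exp _ _) _; rewrite mulnA.
  by rewrite leq_pexp2l ?muln_gt0 ?(leq_trans _ j_large) ?expn_gt0 // -ltnS.
have e4 : 'C(j, 4) * 24 = j * (j - 1) * (j - 2) * (j - 3).
  by rewrite (bin_ffact j 4) !ffactnS ffactn0 muln1 -!subn1 -!subnDA !mulnA.
have e3 : (16 * j) ^ 3 = 4096 * (j * j * j) by ring.
have j_ge : 2 ^ 27 * (j * j * j) <= j * j * j * j.
  by rewrite [X in _ <= X]mulnC leq_mul2r j_large orbT.
have falling_ge : j * (j - 3) * (j - 3) * (j - 3) <= j * (j - 1) * (j - 2) * (j - 3).
  by rewrite !leq_mul // leq_sub2l.
have half_ge : j * j * j * j <= 8 * (j * (j - 3) * (j - 3) * (j - 3)).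
  have -> : 8 * (j * (j - 3) * (j - 3) * (j - 3)) =
            j * (2 * (j - 3)) * (2 * (j - 3)) * (2 * (j - 3)) by ring.
  have : j <= 2 * (j - 3) by lia.
  by move=> j_le; rewrite !leq_mul.
rewrite e3 in sb; lia.
Qed.

Lemma exists_sample_exponent : exists2 j, 0 < j & 28 * shatter_bound j 4 <= 2 ^ j.
Proof. by exists (2 ^ 27); [rewrite expn_gt0 | exact: shatter_bound4_le (leqnn _)]. Qed.

End SampleSize.

Lemma sumr_option (T : finType) (V : nmodType) (F : option T -> V) :
  \sum_(o : option T) F o = F None + \sum_(i : T) F (Some i).
Proof.
rewrite (bigD1 None) //=; congr (_ + _).
rewrite (reindex_omap Some id) /=; last by case.
by apply: eq_bigl => x; rewrite eqxx.
Qed.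

Section CrossingTriangles.
Variables (R : realType) (n : nat) (f : 'I_n -> 'rV[R]_3) (c r : 'rV[R]_3).

Lemma zcoordD (a b : 'rV[R]_3) : zcoord (a + b) = zcoord a + zcoord b.
Proof. by rewrite /zcoord mxE. Qed.

Lemma zcoordZ (k : R) (a : 'rV[R]_3) : zcoord (k *: a) = k * zcoord a.
Proof. by rewrite /zcoord mxE. Qed.

Lemma zcoordB (a b : 'rV[R]_3) : zcoord (a - b) = zcoord a - zcoord b.
Proof. by rewrite /zcoord !mxE. Qed.

Lemma zcoord_sum (I : finType) (l : I -> R) (w : I -> 'rV[R]_3) :
  zcoord (\sum_i l i *: w i) = \sum_i l i * zcoord (w i).
Proof. by rewrite /zcoord summxE; apply: eq_bigr => i _; rewrite mxE. Qed.

Lemma dot3E (u w : 'rV[R]_3) : dot3 u w = dotv u w.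
Proof. by []. Qed.

Definition halfspaces := [set A : {set 'I_n} |
  `[< exists u : 'rV[R]_3, u != 0 /\ A = [set i | 0 <= dot3 u (f i - c)] >]].

Definition crossing (S : {set 'I_n}) := exists x, in_conv_hull f S x /\ on_segment c r x.

Definition crossing_triangles := [set S : {set 'I_n} | (#|S| == 3)%N && `[< crossing S >]].

Hypothesis n_gt0 : (0 < n)%N.
Hypothesis f_above : forall i, 0 < zcoord (f i).
Hypothesis c_center : centerpoint f c.
Hypothesis r_ground : zcoord r = 0.

Lemma zcoord_center_gt0 : 0 < zcoord c.
Proof.
pose u : 'rV[R]_3 := - delta_mx 0 (inord 2).
have u_dot x : dot3 u x = - zcoord x.
  rewrite /dot3 /zcoord (bigD1 (inord 2)) //= big1 ?addr0 => [|k /negbTE k2].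
    by rewrite !mxE !eqxx mulN1r.
  by rewrite !mxE k2 mulr0n oppr0 mul0r.
have u_nz : u != 0.
  apply/eqP => /rowP /(_ (inord 2)); rewrite !mxE !eqxx /= => /eqP.
  by rewrite oppr_eq0 oner_eq0.
have := c_center u_nz (lexx (dot3 u c)).
have [/existsP[i]|/existsPn none] := boolP [exists i, dot3 u c <= dot3 u (f i)].
  by rewrite !u_dot lerN2 => fi_le _; apply: lt_le_trans (f_above i) fi_le.
rewrite (_ : [set i | _] = set0) ?cards0 ?muln0 ?leqn0 => [/eqP n0|].
  by move: n_gt0; rewrite n0.
by apply/setP => i; rewrite !inE; apply/negbTE/none.
Qed.

Lemma halfspace_large A : A \in halfspaces -> (n <= 4 * #|A|)%N.
Proof.
rewrite inE => /asboolP [u [u_nz ->]].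
have := c_center u_nz (lexx (dot3 u c)).
by congr (_ <= 4 * _)%N; apply: eq_card => i; rewrite !inE !dot3E dotvBr subr_ge0.
Qed.

(* Four points have a linear dependency (relative to [c]) with a negative
   coefficient; its positive part cannot be cut out by a halfspace. *)
Lemma halfspaces_shatter_free (W : {set 'I_n}) : #|W| = 4%N -> ~ shatters halfspaces W.
Proof.
move=> cW sh.
have [|g [[k0 gk0] gW g_sum]] := @exists_neg_dependency_in _ _ _ (fun i => f i - c) W.
  by rewrite cW.
have [|B] := sh [set k in W | 0 < g k]; first by apply/subsetP => k; rewrite inE => /andP[].
rewrite inE => /asboolP [u [_ ->]] BW.
have u_sign k : k \in W -> (0 <= dot3 u (f k - c)) = (0 < g k).
  by move=> kW; have /setP/(_ k) := BW; rewrite !inE kW andbT /= => ->.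
have k0W : k0 \in W by apply: contraLR gk0 => /gW ->; rewrite ltxx.
have term_ge0 k : 0 <= g k * dot3 u (f k - c).
  have [kW|/gW ->] := boolP (k \in W); last by rewrite mul0r.
  have [gk|gk] := ltrP 0 (g k); first by apply: mulr_ge0; [exact: ltW | rewrite u_sign].
  by apply: mulr_le0 => //; apply: ltW; rewrite ltNge u_sign // -leNgt.
have term_gt0 : 0 < g k0 * dot3 u (f k0 - c).
  by rewrite nmulr_rgt0 // ltNge u_sign // -leNgt ltW.
have := congr1 (dotv u) g_sum; rewrite dotv_sumr dotv0r (bigD1 k0) //=.
by move/eqP; rewrite paddr_eq0 ?sumr_ge0 // (gt_eqF term_gt0).
Qed.

Lemma dependency_of_hitting_sample m (g : {ffun 'I_m -> 'I_n}) :
  (forall A, A \in halfspaces -> exists i, g i \in A) ->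
  exists b t, nonneg_dependency (fun i => f i - c) (r - c) b t /\
    supp b \subset [set g i | i in 'I_m].
Proof.
move=> g_hits.
pose w (o : option 'I_m) : 'rV[R]_3 := if o is Some i then f (g i) - c else - (r - c).
have w_hyp u : exists o, 0 <= dotv u (w o).
  have [->|u_nz] := eqVneq u 0.
    by exists None; rewrite /dotv big1 // => k _; rewrite mxE mul0r.
  have [|i gi] := g_hits [set i | 0 <= dot3 u (f i - c)].
    by rewrite inE; apply/asboolP; exists u.
  by exists (Some i); rewrite inE in gi.
have [l [l_ge0 [o0 lo0] l_sum]] := gordan w_hyp.
pose b j := \sum_(i | g i == j) l (Some i).
have b_ge i : l (Some i) <= b (g i).
  by rewrite /b (bigD1 i) //= lerDl sumr_ge0.
exists b, (l None); split; first split.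
- by move=> j; apply: sumr_ge0.
- exact: l_ge0.
- case: o0 lo0 => [i|] lo0; last by left; rewrite gt_eqF.
  by right; exists (g i); rewrite gt_eqF // (lt_le_trans lo0 (b_ge i)).
- move: l_sum; rewrite sumr_option /= scalerN => /eqP; rewrite addrC subr_eq0 => /eqP <-.
  rewrite (partition_big g predT) //=; apply: eq_bigr => j _.
  by rewrite scaler_suml; apply: eq_bigr => i /eqP ->.
apply/subsetP => j; rewrite inE => bj.
have [/existsP[i /eqP <-]|/existsPn none] := boolP [exists i, g i == j]; first exact: imset_f.
by move: bj; rewrite /b big_pred0 ?eqxx // => i; apply: negbTE (none i).
Qed.

(* A nonnegative combination of the [f j - c] pointing along [r - c] is, after
   normalisation, a point of the hull of the [f j] on the ray from [c] through
   [r]; it cannot pass beyond [r] because all the [f j] lie above the plane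
   [z = 0]. *)
Lemma crossing_of_dependency b t (T : {set 'I_n}) :
  nonneg_dependency (fun i => f i - c) (r - c) b t -> supp b \subset T -> crossing T.
Proof.
case=> b_ge0 t_ge0 nz b_sum bT.
have zc := zcoord_center_gt0.
set B := \sum_j b j.
have B_gt0 : 0 < B.
  rewrite lt_def psumr_eq0 // andbC sumr_ge0 //=; apply/negP => /allP b_eq0.
  have {}b_eq0 j : b j = 0 by apply/eqP/b_eq0; rewrite mem_index_enum.
  case: nz => [t_nz|[j]]; last by rewrite b_eq0 eqxx.
  move: b_sum; rewrite big1 => [/esym/eqP|j _]; last by rewrite b_eq0 scale0r.
  rewrite scaler_eq0 (negbTE t_nz) subr_eq0 => /eqP rc.
  by move: zc; rewrite -rc r_ground ltxx.
pose w j := b j / B.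
have w_ge0 j : 0 <= w j by rewrite divr_ge0 ?b_ge0 ?ltW.
have hull_pt : \sum_j w j *: f j = c + (t / B) *: (r - c).
  have -> : \sum_j w j *: f j = B^-1 *: \sum_j b j *: f j.
    by rewrite scaler_sumr; apply: eq_bigr => j _; rewrite scalerA mulrC.
  have -> : \sum_j b j *: f j = \sum_j b j *: (f j - c) + B *: c.
    rewrite scaler_suml -big_split /=; apply: eq_bigr => j _.
    by rewrite scalerBr subrK.
  rewrite b_sum scalerDr !scalerA mulVf ?gt_eqF // scale1r addrC.
  by rewrite mulrC.
exists (\sum_j w j *: f j); split.
  exists w; split => //.
  - move=> j jT; rewrite /w (_ : b j = 0) ?mul0r //.
    by apply/eqP; apply: contraNT jT => bj; apply: (subsetP bT); rewrite inE.
  - by rewrite /w -mulr_suml divff // gt_eqF.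
exists (t / B); split.
- exact: divr_ge0 t_ge0 (ltW B_gt0).
- have : 0 <= zcoord (\sum_j w j *: f j).
    by rewrite zcoord_sum sumr_ge0 // => j _; rewrite mulr_ge0 ?w_ge0 ?ltW.
  rewrite hull_pt zcoordD zcoordZ zcoordB r_ground => z_ge0.
  have : 0 <= (1 - t / B) * zcoord c by lra.
  by rewrite pmulr_lge0 // subr_ge0.
- by rewrite hull_pt scalerBr scalerBl scale1r addrA addrAC.
Qed.

Lemma crossing_triangle_in_sample m (g : {ffun 'I_m -> 'I_n}) :
  injective g -> (3 <= m)%N -> (forall A, A \in halfspaces -> exists i, g i \in A) ->
  exists2 T, T \in crossing_triangles & T \subset [set g i | i in 'I_m].
Proof.
move=> g_inj m_ge3 /dependency_of_hitting_sample[b [t [dep_b b_g]]].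
have [b' [t' [dep_b' b'_small b'_b]]] := nonneg_dependency_small dep_b.
have [|T [b'T Tg cT]] := exists_subset_card_between (subset_trans b'_b b_g) b'_small.
  by rewrite card_imset ?card_ord.
exists T => //; rewrite inE cT eqxx; apply/asboolP.
exact: crossing_of_dependency dep_b' b'T.
Qed.

Lemma card_crossing_triangles j : (0 < j)%N -> (28 * shatter_bound j 4 <= 2 ^ j)%N ->
  (4 * (8 * j) ^ 2 <= n)%N -> (n ^ 3 <= 2 * (8 * j) ^ 3 * #|crossing_triangles|)%N.
Proof.
move=> j_gt0 j_large n_large; set m := (8 * j)%N.
have m_ge3 : (3 <= m)%N by rewrite /m; lia.
set good := [set g : {ffun 'I_m -> 'I_n} | injectiveb g && (g \notin missing j halfspaces)].
have good_large : (n ^ m <= 2 * #|good|)%N.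
  have := card_injective_avoiding (B := missing j halfspaces); rewrite !card_ord; apply.
    exact: card_missing halfspace_large halfspaces_shatter_free j_gt0 j_large.
  exact: n_large.
have good_small : (#|good| <= #|crossing_triangles| * (m ^ 3 * n ^ (m - 3)))%N.
  have := card_ffun_covered (k := 3) (Tr := crossing_triangles) (G := good).
  rewrite !card_ord; apply=> [T|g]; first by rewrite inE => /andP[/eqP].
  rewrite !inE => /andP[/injectiveP g_inj g_good]; apply: crossing_triangle_in_sample => //.
  move=> A AF; move: g_good; rewrite negb_exists => /forallP /(_ A).
  by rewrite AF /= negb_forall => /existsP[i]; rewrite negbK; exists i.
have n_split : (n ^ m = n ^ 3 * n ^ (m - 3))%N by rewrite -expnD subnKC.
have : (n ^ 3 * n ^ (m - 3) <= 2 * m ^ 3 * #|crossing_triangles| * n ^ (m - 3))%N.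
  rewrite -n_split; apply: leq_trans good_large _.
  have /leq_trans := leq_mul (leqnn 2) good_small; apply; apply: eq_leq; ring.
by rewrite leq_pmul2r // expn_gt0 n_gt0.
Qed.

End CrossingTriangles.

Theorem lemma2p16 :
  exists alpha : rat, 0 < alpha /\
  exists N : nat,
  forall (R : realType) (n : nat) (f : 'I_n -> 'rV[R]_3) (c r : 'rV[R]_3),
    (N <= n)%N ->
    injective f ->
    (forall i, 0 < zcoord (f i)) ->
    centerpoint f c ->
    zcoord r = 0 ->
    exists Tr : {set {set 'I_n}},
      (forall S, S \in Tr ->
         #|S| = 3%N /\ exists x, in_conv_hull f S x /\ on_segment c r x) /\
      ratr alpha * n%:R ^+ 3 <= (#|Tr|%:R : R).
Proof.
have [j j_gt0 j_large] := exists_sample_exponent.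
set m := (8 * j)%N.
have m_gt0 : (0 < m)%N by rewrite muln_gt0.
have coef_gt0 : (0 < 2 * m ^ 3)%N by rewrite muln_gt0 expn_gt0 m_gt0.
exists (2 * m ^ 3)%:R^-1; split; first by rewrite invr_gt0 ltr0n.
exists (4 * m ^ 2)%N => R n f c r n_large _ f_above c_center r_ground.
have n_gt0 : (0 < n)%N by apply: leq_trans n_large; rewrite muln_gt0 expn_gt0 m_gt0.
exists (crossing_triangles f c r); split.
  by move=> S; rewrite inE => /andP[/eqP cS /asboolP].
rewrite fmorphV rmorph_nat ler_pdivrMl ?ltr0n // -natrX -natrM ler_nat.
exact: card_crossing_triangles.
Qed.
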